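(* Let $\mathcal{L}:\mathcal{M}_d\to\mathcal{M}_d$ be a unital, reversible Liouvillian with an almost commuting unitary eigenbasis $\{U_i\}_{i\in G}$ associated to a finite abelian group $G$, with $\mathcal{L}(U_i)=\lambda_iU_i$, and let $P_t:V(G)\to V(G)$ be the associated classical semigroup $P_tf=\sum_{i\in G}e^{\lambda_it}\hat f(i)\chi_i$. Then for all $t\geq 0$, $$\|e^{t\mathcal{L}}\|_{2\to4,\frac{\mathbb{1}}{d}}\leq\|P_t\|_{2\to4}.$$
   Context: A Liouvillian generates a semigroup $e^{t\mathcal{L}}$ of completely positive trace-preserving maps; unital: $\mathcal{L}(\mathbb{1})=0$; reversible: $\mathcal{L}=\mathcal{L}^*$ (Hilbert–Schmidt adjoint), so the $\lambda_i$ are real. Almost commuting unitary basis associated to a finite abelian group $G$ with $|G|=d^2$: unitaries $\{U_i\}_{i\in G}\subset\mathcal{M}_d$ with $U_0=\mathbb{1}_d$, $\text{tr}(U_i^\dagger U_j)=d\delta_{ij}$, and for all $i,j$ there are phases $|\phi(i,j)|=|\phi'(i,j)|=1$ with $U_iU_j=\phi(i,j)U_jU_i$ and $U_iU_j=\phi'(i,j)U_{i+j}$. Fix a group isomorphism $i\mapsto\chi_i$ from $G$ to its character group $\hat G$. $V(G)$ is the space of functions $G\to\mathbb{C}$ with $\|f\|_p^p=\frac{1}{|G|}\sum_g|f(g)|^p$, inner product $\langle f,h\rangle=\frac1{|G|}\sum_g\overline{f(g)}h(g)$, $\hat f(i)=\langle\chi_i,f\rangle$, and $\|A\|_{2\to4}=\sup_{f\neq0}\|Af\|_4/\|f\|_2$.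 On $\mathcal{M}_d$: $\|Y\|_{p,\frac{\mathbb{1}}{d}}=d^{-1/p}(\text{tr}|Y|^p)^{1/p}$, $\|S\|_{2\to4,\frac{\mathbb{1}}{d}}=\sup_{X\neq0}\|S(X)\|_{4,\frac{\mathbb{1}}{d}}/\|X\|_{2,\frac{\mathbb{1}}{d}}$. *)

From HB Require Import structures.
From mathcomp Require Import all_boot all_order all_algebra.
From mathcomp Require Import complex.
From mathcomp Require Import all_classical all_reals all_analysis.

Set Implicit Arguments.
Unset Strict Implicit.
Unset Printing Implicit Defensive.

Import Order.TTheory GRing.Theory Num.Theory.
Import numFieldNormedType.Exports.
Local Open Scope ring_scope.
Local Open Scope classical_set_scope.

Section QuantumDefs.
Variable R : realType.
Local Notation C := R[i].

Definition hc (m n : nat) (A : 'M[C]_(m, n)) : 'M[C]_(n, m) := (map_mx conjc A)^T.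

Variable d : nat.

(* ||Y||_{p,1/d} = d^{-1/p} (tr |Y|^p)^{1/p} for p = 2, 4; |Y|^2 = Y^dag Y, |Y|^4 = (Y^dag Y)^2 *)
Definition nrm2 (X : 'M[C]_d) : R :=
  (d%:R) `^ (- (1 / 2)) * (complex.Re (\tr (hc X *m X))) `^ (1 / 2).
Definition nrm4 (Y : 'M[C]_d) : R :=
  (d%:R) `^ (- (1 / 4)) * (complex.Re (\tr ((hc Y *m Y) *m (hc Y *m Y)))) `^ (1 / 4).

Definition norm24_mx (S : 'M[C]_d -> 'M[C]_d) : \bar R :=
  ereal_sup [set ((nrm4 (S X) / nrm2 X)%:E) | X in [set X : 'M[C]_d | X != 0]].

Definition expsup (L : 'M[C]_d -> 'M[C]_d) (t : R) (X : 'M[C]_d) : 'M[C]_d :=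
  limn (series (fun n => (real_complex R (t ^+ n / (n`!)%:R)) *: iter n L X)).

(* positivity of an element of M_k (x) M_d, written as a k x k block matrix *)
Definition psd_block (k : nat) (A : 'I_k -> 'I_k -> 'M[C]_d) : Prop :=
  forall v : 'I_k -> 'cV[C]_d,
    0 <= \sum_(a < k) \sum_(b < k) (hc (v a) *m A a b *m v b) 0 0.

Definition completely_positive (T : 'M[C]_d -> 'M[C]_d) : Prop :=
  forall (k : nat) (A : 'I_k -> 'I_k -> 'M[C]_d),
    psd_block A -> psd_block (fun a b => T (A a b)).

Definition trace_preserving (T : 'M[C]_d -> 'M[C]_d) : Prop :=
  forall X, \tr (T X) = \tr X.

Definition liouvillian (L : {linear 'M[C]_d -> 'M[C]_d}) : Prop :=
  forall t : R, 0 <= t ->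
    completely_positive (expsup L t) /\ trace_preserving (expsup L t).

Definition unital (L : 'M[C]_d -> 'M[C]_d) : Prop := L 1%:M = 0.

Definition reversible (L : 'M[C]_d -> 'M[C]_d) : Prop :=
  forall A B : 'M[C]_d, \tr (hc A *m L B) = \tr (hc (L A) *m B).

Variable G : finZmodType.

Definition almost_commuting_unitary_basis (U : G -> 'M[C]_d) : Prop :=
  [/\ U 0 = 1%:M,
      forall i, hc (U i) *m U i = 1%:M,
      forall i j, \tr (hc (U i) *m U j) = if i == j then d%:R else 0,
      forall i j, exists ph : C, `|ph| = 1 /\ U i *m U j = ph *: (U j *m U i)
    & forall i j, exists ph : C, `|ph| = 1 /\ U i *m U j = ph *: U (i + j)].

Definition is_character (f : G -> C) : Prop :=
  f 0 = 1 /\ forall g h, f (g + h) = f g * f h.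

Definition character_iso (chi : G -> G -> C) : Prop :=
  [/\ forall i, is_character (chi i),
      forall i j g, chi (i + j) g = chi i g * chi j g,
      injective chi
    & forall f, is_character f -> exists i, chi i = f].

Definition lpG (p : R) (f : G -> C) : R :=
  ((#|G|%:R)^-1 * \sum_(g : G) (complex.Re `|f g|) `^ p) `^ (p^-1).

Definition innerG (f h : G -> C) : C := (#|G|%:R)^-1 * \sum_(g : G) conjc (f g) * h g.

Definition fhat (chi : G -> G -> C) (f : G -> C) (i : G) : C := innerG (chi i) f.

Definition Pt (chi : G -> G -> C) (lam : G -> R) (t : R) (f : G -> C) : G -> C :=
  fun g => \sum_(i : G) real_complex R (expR (lam i * t)) * fhat chi f i * chi i g.

Definition norm24_fun (A : (G -> C) -> (G -> C)) : \bar R :=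
  ereal_sup [set ((lpG 4 (A f) / lpG 2 f)%:E) | f in [set f : G -> C | exists g, f g != 0]].

End QuantumDefs.

(* Write X = \sum_i x_i U_i, the U_i being an orthogonal basis of M_d; then
   e^{tL} X = \sum_i e^{lam_i t} x_i U_i, and P_t acts in the same way on the
   coefficients c_i of f = \sum_i c_i chi_i.  Choose c_i = |x_i|.  Orthogonality
   of the U_i and Parseval give ||X||_2 = ||f||_2.  For Y = \sum_i y_i U_i,
   tr((Y^+ Y)^2) expands into traces of U_i^+ U_j U_k^+ U_l, each a phase times
   U_(-i+j-k+l), hence of modulus d when -i+j-k+l = 0 and 0 otherwise.  The
   triangle inequality thus bounds ||Y||_4^4 by the sum of |y_i y_j y_k y_l| over
   -i+j-k+l = 0, which is exactly ||\sum_i |y_i| chi_i||_4^4; for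
   y_i = e^{lam_i t} x_i this is ||P_t f||_4^4. *)

From HB Require Import structures.
From mathcomp Require Import all_boot all_order all_algebra.
From mathcomp Require Import complex.
From mathcomp Require Import all_classical all_reals all_analysis.
From mathcomp Require Import fingroup ring.
Set Implicit Arguments.
Unset Strict Implicit.
Unset Printing Implicit Defensive.

Import Order.TTheory GRing.Theory Num.Theory.
Import numFieldNormedType.Exports.
Local Open Scope ring_scope.

Lemma natr_card_gt0 (K : numDomainType) (G : finZmodType) : (0 : K) < #|G|%:R.
Proof. by rewrite ltr0n; apply/card_gt0P; exists 0. Qed.

Lemma sum_mulr_delta (K : pzSemiRingType) (I : finType) (F : I -> K) m :
  \sum_i F i * (i == m)%:R = F m.
Proof.
rewrite (bigD1 m) //= eqxx mulr1 big1 ?addr0 // => i /negbTE ->.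
by rewrite mulr0.
Qed.

Section Characters.
Variables (R : realType) (G : finZmodType) (chi : G -> G -> R[i]).
Hypothesis chi_iso : character_iso chi.

Lemma charD i g h : chi i (g + h) = chi i g * chi i h.
Proof. by case: chi_iso => Hchar _ _ _; case: (Hchar i) => _ ->. Qed.

Lemma char_idxD i j g : chi (i + j) g = chi i g * chi j g.
Proof. by case: chi_iso => _ ->. Qed.

Lemma char_at0 i : chi i 0 = 1.
Proof. by case: chi_iso => Hchar _ _ _; case: (Hchar i). Qed.

Lemma char_neq0 i g : chi i g != 0.
Proof.
apply: contra_neq (oner_neq0 (R[i])) => chi0.
by rewrite -(char_at0 i) -(subrr g) charD chi0 mul0r.
Qed.

Lemma char_idx0 g : chi 0 g = 1.
Proof.
by apply: (mulfI (char_neq0 0 g)); rewrite mulr1 -char_idxD addr0.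
Qed.

Lemma char_mulrn i g n : chi i g ^+ n = chi i (g *+ n).
Proof.
elim: n => [|n IH]; first by rewrite expr0 mulr0n char_at0.
by rewrite exprS IH mulrS charD.
Qed.

Lemma norm_char i g : `|chi i g| = 1.
Proof.
have chiX : chi i g ^+ #|G| = 1.
  rewrite char_mulrn -FinRing.zmodXgE.
  have := @cyclic.expg_cardG _ [set: G]%G g (finset.in_setT g).
  by rewrite finset.cardsT => ->; rewrite char_at0.
have G_gt0 : (0 < #|G|)%N by apply/card_gt0P; exists 0.
by apply/eqP; rewrite -(pexpr_eq1 G_gt0) ?normr_ge0 // -normrX chiX normr1.
Qed.

Lemma conj_char i g : (chi i g)^*%C = chi (- i) g.
Proof.
apply: (mulfI (char_neq0 i g)).
by rewrite -sqr_normc norm_char expr1n -char_idxD subrr char_idx0.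
Qed.

Lemma sum_char m : \sum_g chi m g = (m == 0)%:R * #|G|%:R.
Proof.
have [->|m0] := eqVneq m 0.
  by rewrite mul1r (eq_bigr (fun _ => 1)) ?sumr_const // => g _; rewrite char_idx0.
have [h chih] : exists h, chi m h != 1.
  apply/existsP; apply: contraT; rewrite negb_exists => /forallP chi1.
  case: chi_iso => _ _ chi_inj _; case/negP: m0; apply/eqP/chi_inj.
  by apply/funext => g; rewrite char_idx0; apply/eqP/negPn.
(* Translating the summation variable by h multiplies the sum by chi m h != 1. *)
have sumE : \sum_g chi m g = chi m h * \sum_g chi m g.
  rewrite {1}(reindex_inj (addrI h)) /= mulr_sumr.
  by apply: eq_bigr => g _; rewrite charD.
apply/eqP; move/eqP: sumE; rewrite mul0r -subr_eq0 -{1}(mul1r (\sum_g _)).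
by rewrite -mulrBl mulf_eq0 subr_eq0 eq_sym (negbTE chih).
Qed.

End Characters.

Section FourierSynthesis.
Variables (R : realType) (G : finZmodType) (chi : G -> G -> R[i]).
Hypothesis chi_iso : character_iso chi.
Local Notation C := R[i].
Local Notation n := (#|G|%:R : C).

Definition fsynth (c : G -> C) (h : G) : C := \sum_i c i * chi i h.

Lemma fhat_fsynth c i : fhat chi (fsynth c) i = c i.
Proof.
rewrite /fhat /innerG /fsynth.
under eq_bigr => g _ do rewrite conj_char // mulr_sumr.
rewrite exchange_big /=.
under eq_bigr => j _ do under eq_bigr => g _ do rewrite mulrCA -char_idxD //.
under eq_bigr => j _ do rewrite -mulr_sumr sum_char // addrC subr_eq0 mulrA.
rewrite -mulr_suml mulrC -mulrA mulfV ?(lt0r_neq0 (natr_card_gt0 _ _)) //.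
by rewrite mulr1 sum_mulr_delta.
Qed.

Lemma conjc_fsynth_mul c h :
  (fsynth c h)^*%C * fsynth c h = \sum_i \sum_j ((c i)^*%C * c j) * chi (j - i) h.
Proof.
rewrite /fsynth rmorph_sum mulr_suml; apply: eq_bigr => i _.
rewrite mulr_sumr; apply: eq_bigr => j _.
by rewrite rmorphM /= conj_char // addrC char_idxD // mulrACA.
Qed.

Lemma sum_conjc_fsynth_mul c :
  \sum_h (fsynth c h)^*%C * fsynth c h = n * \sum_i (c i)^*%C * c i.
Proof.
under eq_bigr => h _ do rewrite conjc_fsynth_mul.
rewrite exchange_big mulr_sumr; apply: eq_bigr => i _ /=.
rewrite exchange_big /=.
under eq_bigr => j _ do rewrite -mulr_sumr sum_char // subr_eq0 mulrA mulrAC.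
by rewrite sum_mulr_delta mulrC.
Qed.

Lemma sum_conjc_fsynth_mul_sqr c :
  \sum_h ((fsynth c h)^*%C * fsynth c h) ^+ 2 =
  n * \sum_i \sum_j \sum_k \sum_l
    (- i + j + (- k + l) == 0)%:R * ((c i)^*%C * c j * ((c k)^*%C * c l)).
Proof.
under eq_bigr => h _ do rewrite expr2 conjc_fsynth_mul mulr_suml.
rewrite exchange_big mulr_sumr; apply: eq_bigr => i _ /=.
under eq_bigr => h _ do rewrite mulr_suml.
rewrite exchange_big mulr_sumr; apply: eq_bigr => j _ /=.
under eq_bigr => h _ do rewrite mulr_sumr.
rewrite exchange_big mulr_sumr; apply: eq_bigr => k _ /=.
under eq_bigr => h _ do rewrite mulr_sumr.
rewrite exchange_big mulr_sumr; apply: eq_bigr => l _ /=.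
under eq_bigr => h _ do rewrite mulrACA -char_idxD //.
by rewrite -mulr_sumr sum_char // !(addrC (- _)) mulrC -!mulrA mulrCA.
Qed.

Lemma fsynth_neq0 c i : c i != 0 -> exists g, fsynth c g != 0.
Proof.
apply: contraNP => fsynth0; apply/eqP.
rewrite -(fhat_fsynth c i) /fhat /innerG big1 ?mulr0 // => g _.
have /eqP -> : fsynth c g == 0 by apply/negPn/negP => ?; apply: fsynth0; exists g.
by rewrite mulr0.
Qed.

Lemma Pt_fsynth lam t c :
  Pt chi lam t (fsynth c) = fsynth (fun i => real_complex R (expR (lam i * t)) * c i).
Proof. by apply/funext => h; apply: eq_bigr => i _; rewrite fhat_fsynth. Qed.

End FourierSynthesis.

Lemma mxtrace_sum (K : pzRingType) n (I : finType) (F : I -> 'M[K]_n) :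
  \tr (\sum_i F i) = \sum_i \tr (F i).
Proof. exact: raddf_sum. Qed.

Section ConjugateTranspose.
Variable R : realType.
Local Notation C := R[i].

Lemma hcE m n (A : 'M[C]_(m, n)) i j : hc A i j = (A j i)^*%C.
Proof. by rewrite /hc !mxE. Qed.

Lemma hcK m n (A : 'M[C]_(m, n)) : hc (hc A) = A.
Proof. by apply/matrixP => i j; rewrite !hcE conjcK. Qed.

Lemma hcM m n p (A : 'M[C]_(m, n)) (B : 'M[C]_(n, p)) :
  hc (A *m B) = hc B *m hc A.
Proof.
apply/matrixP => i j; rewrite hcE !mxE rmorph_sum; apply: eq_bigr => k _.
by rewrite rmorphM /= !hcE mulrC.
Qed.

Lemma hcZ m n a (A : 'M[C]_(m, n)) : hc (a *: A) = a^*%C *: hc A.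
Proof. by apply/matrixP => i j; rewrite !mxE rmorphM. Qed.

Lemma hc_sum m n (I : finType) (F : I -> 'M[C]_(m, n)) :
  hc (\sum_i F i) = \sum_i hc (F i).
Proof.
apply/matrixP => i j; rewrite hcE !summxE rmorph_sum.
by apply: eq_bigr => k _; rewrite hcE.
Qed.

Lemma hc1 n : hc (1%:M : 'M[C]_n) = 1%:M.
Proof. by apply/matrixP => i j; rewrite hcE !mxE eq_sym conjc_nat. Qed.

Lemma mxtrace_hc_mul_ge0 n (B : 'M[C]_n) : 0 <= \tr (hc B *m B).
Proof.
apply: sumr_ge0 => i _; rewrite mxE; apply: sumr_ge0 => j _.
by rewrite !mxE mulrC mulcJ_ge0.
Qed.

End ConjugateTranspose.

Section UnitaryBasis.
Variables (R : realType) (d : nat) (G : finZmodType) (U : G -> 'M[R[i]]_d).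
Hypothesis U_basis : almost_commuting_unitary_basis U.
Local Notation C := R[i].

Definition ucomb (x : G -> C) : 'M[C]_d := \sum_i x i *: U i.

Definition phase_multiple (M : 'M[C]_d) (a : G) : Prop :=
  exists2 ph : C, `|ph| = 1 & M = ph *: U a.

Lemma phase_multiple_U a : phase_multiple (U a) a.
Proof. by exists 1; rewrite ?normr1 ?scale1r. Qed.

Lemma phase_multiple_mul M N a b :
  phase_multiple M a -> phase_multiple N b -> phase_multiple (M *m N) (a + b).
Proof.
case: U_basis => _ _ _ _ UU [p p1 ->] [q q1 ->].
have [r [r1 UabE]] := UU a b.
exists (p * q * r); first by rewrite !normrM p1 q1 r1 !mulr1.
by rewrite -scalemxAl -scalemxAr UabE !scalerA.
Qed.

Lemma phase_multiple_hc a : phase_multiple (hc (U a)) (- a).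
Proof.
case: U_basis => U0 Uunitary _ _ UU.
have [r [r1 UNaaE]] := UU (- a) a; rewrite addNr U0 in UNaaE.
have r0 : r != 0 by rewrite -normr_eq0 r1 oner_eq0.
exists r^-1; first by rewrite normfV r1 invr1.
have UhcU : U a *m hc (U a) = 1%:M by apply: mulmx1C; apply: Uunitary.
have : U (- a) *m U a *m hc (U a) = r *: hc (U a) by rewrite UNaaE -scalemxAl mul1mx.
by rewrite -mulmxA UhcU mulmx1 => ->; rewrite scalerA mulVf // scale1r.
Qed.

Lemma mxtrace_hcU_mul a b : \tr (hc (U a) *m U b) = (a == b)%:R * d%:R.
Proof. by case: U_basis => _ _ -> _ _; case: (a == b); rewrite ?mul1r ?mul0r. Qed.

Lemma norm_mxtrace_phase_multiple M a :
  phase_multiple M a -> `|\tr M| = (a == 0)%:R * d%:R.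
Proof.
case: U_basis => U0 _ _ _ _ [p p1 ->].
rewrite mxtraceZ normrM p1 mul1r -(mul1mx (U a)) -hc1 -U0 mxtrace_hcU_mul.
by rewrite normrM !ger0_norm ?ler0n // eq_sym.
Qed.

Lemma mxtrace_hc_ucomb_mul x :
  \tr (hc (ucomb x) *m ucomb x) = d%:R * \sum_i (x i)^*%C * x i.
Proof.
rewrite /ucomb hc_sum mulmx_suml mxtrace_sum mulr_sumr; apply: eq_bigr => i _.
rewrite mulmx_sumr mxtrace_sum.
under eq_bigr => j _ do
  rewrite hcZ -scalemxAl -scalemxAr scalerA mxtraceZ mxtrace_hcU_mul.
rewrite (bigD1 i) //= eqxx big1 ?addr0 => [|j]; first by rewrite mul1r mulrC.
by rewrite eq_sym => /negbTE ->; rewrite mul0r mulr0.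
Qed.

Lemma hc_ucomb_mul_sqrE y :
  hc (ucomb y) *m ucomb y *m (hc (ucomb y) *m ucomb y) =
  \sum_i \sum_j \sum_k \sum_l ((y i)^*%C * y j * ((y k)^*%C * y l)) *:
    (hc (U i) *m U j *m (hc (U k) *m U l)).
Proof.
have hcYYE : hc (ucomb y) *m ucomb y =
    \sum_i \sum_j ((y i)^*%C * y j) *: (hc (U i) *m U j).
  rewrite /ucomb hc_sum mulmx_suml; apply: eq_bigr => i _.
  rewrite mulmx_sumr; apply: eq_bigr => j _.
  by rewrite hcZ -scalemxAl -scalemxAr scalerA.
rewrite hcYYE mulmx_suml; apply: eq_bigr => i _.
rewrite mulmx_suml; apply: eq_bigr => j _.
rewrite mulmx_sumr; apply: eq_bigr => k _.
rewrite mulmx_sumr; apply: eq_bigr => l _.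
by rewrite -scalemxAl -scalemxAr scalerA.
Qed.

Lemma norm_mxtrace_hc_ucomb_mul_sqr y :
  `|\tr (hc (ucomb y) *m ucomb y *m (hc (ucomb y) *m ucomb y))| <=
  d%:R * \sum_i \sum_j \sum_k \sum_l
    (- i + j + (- k + l) == 0)%:R * (`|y i| * `|y j| * (`|y k| * `|y l|)).
Proof.
rewrite hc_ucomb_mul_sqrE mulr_sumr mxtrace_sum.
apply: le_trans (ler_norm_sum _ _ _) _; apply: ler_sum => i _.
rewrite mulr_sumr mxtrace_sum.
apply: le_trans (ler_norm_sum _ _ _) _; apply: ler_sum => j _.
rewrite mulr_sumr mxtrace_sum.
apply: le_trans (ler_norm_sum _ _ _) _; apply: ler_sum => k _.
rewrite mulr_sumr mxtrace_sum.
apply: le_trans (ler_norm_sum _ _ _) _; apply: ler_sum => l _.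
have phase :
    phase_multiple (hc (U i) *m U j *m (hc (U k) *m U l)) (- i + j + (- k + l)).
  by do !apply: phase_multiple_mul; exact: phase_multiple_hc || exact: phase_multiple_U.
rewrite mxtraceZ normrM (norm_mxtrace_phase_multiple phase) !normrM !normcJ.
by rewrite le_eqVlt; apply/orP; left; apply/eqP; ring.
Qed.

End UnitaryBasis.

Section Spanning.
Variables (R : realType) (d : nat) (G : finZmodType) (U : G -> 'M[R[i]]_d).
Hypothesis U_basis : almost_commuting_unitary_basis U.
Hypothesis card_G : #|G| = (d ^ 2)%N.
Local Notation C := R[i].

Lemma dim_gt0 : (0 < d)%N.
Proof.
have : (0 < #|G|)%N by apply/card_gt0P; exists 0.
by rewrite card_G expn_gt0 orbF.
Qed.

Lemma sum_mxvec_index (F : 'I_(d * d) -> C) :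
  \sum_c F c = \sum_r \sum_s F (mxvec_index r s).
Proof.
rewrite pair_big /= (reindex (uncurry (@mxvec_index d d))) /=.
  by apply: eq_bigr => -[r s].
exact: curry_mxvec_bij.
Qed.

(* The #|G| = d^2 vectorised U_i are orthogonal, hence a basis of M_d. *)
Lemma ucomb_surj (X : 'M[C]_d) : exists x : G -> C, X = ucomb U x.
Proof.
pose W : 'M[C]_(#|G|, d * d) := \matrix_k mxvec (U (enum_val k)).
have d_neq0 : (d%:R : C) != 0 by rewrite pnatr_eq0 -lt0n dim_gt0.
have WhcW : W *m hc W = (d%:R : C)%:M.
  apply/matrixP => k j; rewrite !mxE sum_mxvec_index.
  rewrite -[_ *+ (k == j)]mulr_natl -(inj_eq enum_val_inj) eq_sym.
  rewrite -(mxtrace_hcU_mul U_basis).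
  rewrite /mxtrace exchange_big; apply: eq_bigr => r _.
  by rewrite mxE; apply: eq_bigr => s _; rewrite !mxE !mxvecE mulrC.
have W_free : row_free W.
  apply/row_freeP; exists (d%:R^-1 *: hc W).
  by rewrite -scalemxAr WhcW scale_scalar_mx mulVf.
have W_full : row_full W by rewrite /row_full (eqP W_free) card_G mulnn.
have /submxP [D XD] := submx_full (mxvec X) W_full.
exists (fun g => D 0 (enum_rank g)).
rewrite -[X]mxvecK XD mulmx_sum_row linear_sum /ucomb.
rewrite (reindex (enum_val : 'I_#|G| -> G)) /=; last exact/onW_bij/enum_val_bij.
by apply: eq_bigr => k _; rewrite enum_valK rowK linearZ /= mxvecK.
Qed.

End Spanning.

Section Exponential.
Variable R : realType.
Local Notation C := R[i].
Local Open Scope classical_set_scope.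
Local Open Scope complex_scope.

Lemma cvg_real_complex (u : nat -> R) (l : R) :
  u n @[n --> \oo] --> l -> ((u n)%:C : C^o) @[n --> \oo] --> (l%:C : C^o).
Proof.
move=> /cvgrPdist_lt u_l; apply/cvgrPdist_lt => e e_gt0.
have [Re_gt0 Im0] : 0 < complex.Re e /\ complex.Im e = 0.
  by move: e_gt0; rewrite ltcE => /andP [/eqP -> ->].
near=> n.
have : `|l - u n| < complex.Re e by near: n; exact: u_l.
rewrite -rmorphB /= normc_def /= expr0n /= addr0 sqrtr_sqr => ?.
by rewrite ltcE /= Im0 eqxx.
Unshelve. all: by end_near. Qed.

Variables (d : nat) (G : finZmodType) (U : G -> 'M[C]_d).
Variables (L : {linear 'M[C]_d -> 'M[C]_d}) (lam : G -> R).
Hypothesis L_U : forall i, L (U i) = (lam i)%:C *: U i.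

Lemma iter_ucomb x n : iter n L (ucomb U x) = ucomb U (fun i => x i * (lam i)%:C ^+ n).
Proof.
elim: n => [|n IH]; first by apply: eq_bigr => i _; rewrite expr0 mulr1.
rewrite iterS IH linear_sum; apply: eq_bigr => i _.
by rewrite linearZ /= L_U scalerA exprSr mulrA.
Qed.

Lemma expsup_ucomb x t :
  expsup L t (ucomb U x) = ucomb U (fun i => x i * (expR (lam i * t))%:C).
Proof.
rewrite /expsup.
have -> : series (fun n => (t ^+ n / n`!%:R)%:C *: iter n L (ucomb U x)) =
    (fun N => ucomb U (fun i => x i * (series (exp_coeff (lam i * t)) N)%:C)).
  apply/funext => N; rewrite /series /= /ucomb.
  under eq_bigr => n _ do rewrite iter_ucomb scaler_sumr.
  rewrite exchange_big /=; apply: eq_bigr => i _.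
  rewrite rmorph_sum mulr_sumr scaler_suml; apply: eq_bigr => n _.
  rewrite scalerA /exp_coeff /= exprMn; congr (_ *: _).
  by rewrite !rmorphM !rmorphXn /=; ring.
have cvg_sum : (fun N => ucomb U (fun i => x i * (series (exp_coeff (lam i * t)) N)%:C)
    : 'M[C^o]_d) @ \oo --> (ucomb U (fun i => x i * (expR (lam i * t))%:C) : 'M[C^o]_d).
  apply: (cvg_big add_continuous) => i _.
  apply: cvgZl; apply: cvgMr; apply: cvg_real_complex.
  by have := is_cvg_series_exp_coeff (lam i * t); rewrite expRE /pseries -exp_coeffE.
exact: cvg_lim cvg_sum.
Qed.
End Exponential.

Section ComplexModulus.
Variable R : realType.
Local Notation C := R[i].
Local Open Scope complex_scope.

Lemma Re_normc_ge0 (z : C) : 0 <= complex.Re `|z|.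
Proof. by rewrite normc_def /= sqrtr_ge0. Qed.

Lemma Re_normcK (z : C) : (complex.Re `|z|)%:C = `|z|.
Proof. by rewrite normc_def. Qed.

Lemma Re_normc_sqr (z : C) : ((complex.Re `|z|) ^+ 2)%:C = z^* * z.
Proof. by rewrite rmorphXn /= Re_normcK sqr_normc mulrC. Qed.

Lemma conjc_normc (z : C) : `|z|^* = `|z|.
Proof. by rewrite -Re_normcK conjc_real. Qed.

Lemma Re_le_normc (z : C) : (complex.Re z)%:C <= `|z|.
Proof. by apply: le_trans (normc_ge_Re z); rewrite lecR real_ler_norm ?num_real. Qed.

End ComplexModulus.

Lemma powRN_mulK (R : realType) (a b p : R) :
  0 < a -> 0 <= b -> a `^ (- p) * (a * b) `^ p = b `^ p.
Proof.
move=> a_gt0 b_ge0; rewrite powRM ?(ltW a_gt0) // mulrA powRN mulVf ?mul1r //.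
by rewrite gt_eqF // powR_gt0.
Qed.

Lemma lpG_natE (R : realType) (G : finZmodType) (p : nat) (f : G -> R[i]) :
  (0 < p)%N ->
  lpG p%:R f = ((#|G|%:R)^-1 * \sum_g (complex.Re `|f g|) ^+ p) `^ (p%:R^-1).
Proof.
move=> p_gt0; congr ((_ * _) `^ _); apply: eq_bigr => g _.
by rewrite powR_mulrn // Re_normc_ge0.
Qed.

Section NormComparison.
Variables (R : realType) (d : nat) (G : finZmodType).
Variables (U : G -> 'M[R[i]]_d) (chi : G -> G -> R[i]).
Hypothesis card_G : #|G| = (d ^ 2)%N.
Hypothesis U_basis : almost_commuting_unitary_basis U.
Hypothesis chi_iso : character_iso chi.
Local Notation C := R[i].
Local Notation n := (#|G|%:R : R).
Local Open Scope complex_scope.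

Variables (L : {linear 'M[C]_d -> 'M[C]_d}) (lam : G -> R).
Hypothesis L_U : forall i, L (U i) = (lam i)%:C *: U i.

Definition ell2 (x : G -> C) : R := (\sum_i (complex.Re `|x i|) ^+ 2) `^ 2^-1.

Lemma sum_Re_normc_sqrE (x : G -> C) :
  (\sum_i (complex.Re `|x i|) ^+ 2)%:C = \sum_i (x i)^* * x i.
Proof. by rewrite rmorph_sum; apply: eq_bigr => i _; rewrite -Re_normc_sqr. Qed.

Lemma nrm2_ucomb x : nrm2 (ucomb U x) = ell2 x.
Proof.
have trE : \tr (hc (ucomb U x) *m ucomb U x) =
    (d%:R * \sum_i (complex.Re `|x i|) ^+ 2)%:C.
  by rewrite mxtrace_hc_ucomb_mul // -sum_Re_normc_sqrE rmorphM rmorph_nat.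
rewrite /nrm2 trE /= !div1r powRN_mulK ?ltr0n ?(dim_gt0 card_G) //.
by apply: sumr_ge0 => i _; rewrite exprn_ge0 ?Re_normc_ge0.
Qed.

Lemma lpG2_fsynth_normc x : lpG 2 (fsynth chi (fun i => `|x i|)) = ell2 x.
Proof.
rewrite (@lpG_natE _ _ 2) //; congr (_ `^ _).
apply: (mulfI (lt0r_neq0 (natr_card_gt0 R G))).
rewrite mulrA mulfV ?mul1r ?(lt0r_neq0 (natr_card_gt0 R G)) //; apply: complexI.
rewrite rmorphM rmorph_nat /= !sum_Re_normc_sqrE sum_conjc_fsynth_mul //.
by congr (_ * _); apply: eq_bigr => i _; rewrite conjc_normc -expr2 sqr_normc mulrC.
Qed.

Lemma nrm4_ucomb_le y : nrm4 (ucomb U y) <= lpG 4 (fsynth chi (fun i => `|y i|)).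
Proof.
set F := fsynth chi _; set Y := hc (ucomb U y) *m ucomb U y.
pose M := n^-1 * \sum_h (complex.Re `|F h|) ^+ 4.
have M_ge0 : 0 <= M.
  rewrite mulr_ge0 ?invr_ge0 ?ler0n // sumr_ge0 // => h _.
  by rewrite exprn_ge0 ?Re_normc_ge0.
have ME : (M%:C : C) = \sum_i \sum_j \sum_k \sum_l
    (- i + j + (- k + l) == 0)%:R * (`|y i| * `|y j| * (`|y k| * `|y l|)).
  apply: (mulfI (lt0r_neq0 (natr_card_gt0 C G))).
  rewrite /M rmorphM /= fmorphV /= rmorph_nat mulrA mulfV ?mul1r; last first.
    exact: lt0r_neq0 (natr_card_gt0 C G).
  transitivity (\sum_h ((F h)^* * F h) ^+ 2).
    by rewrite rmorph_sum; apply: eq_bigr => h _; rewrite -Re_normc_sqr -rmorphXn -exprM.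
  rewrite sum_conjc_fsynth_mul_sqr //; congr (_ * _).
  by do 4!(apply: eq_bigr => ? _); rewrite !conjc_normc.
have tr_le : complex.Re (\tr (Y *m Y)) <= d%:R * M.
  rewrite -lecR rmorphM /= rmorph_nat ME.
  exact: le_trans (Re_le_normc _) (norm_mxtrace_hc_ucomb_mul_sqr U_basis y).
have tr_ge0 : 0 <= complex.Re (\tr (Y *m Y)).
  have hcY : hc Y = Y by rewrite /Y hcM hcK.
  by move: (mxtrace_hc_mul_ge0 Y); rewrite hcY lecE => /andP[].
have d_gt0 : (0 : R) < d%:R by rewrite ltr0n (dim_gt0 card_G).
rewrite (@lpG_natE _ _ 4) // /nrm4 -/Y !div1r -(powRN_mulK _ d_gt0 M_ge0).
apply: ler_wpM2l; first exact: powR_ge0.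
by apply: ge0_ler_powR; rewrite ?nnegrE // mulr_ge0 ?ler0n.
Qed.

Lemma expsup_ratio_le t X : X != 0 ->
  exists2 f : G -> R[i], (exists g, f g != 0) &
    nrm4 (expsup L t X) / nrm2 X <= lpG 4 (Pt chi lam t f) / lpG 2 f.
Proof.
move=> X0.
have [x XE] := ucomb_surj U_basis card_G X; subst X.
have [i xi0] : exists i, x i != 0.
  apply/existsP; move: X0; apply: contraR => /existsPn x0.
  by apply/eqP/big1 => i _; move/negPn/eqP: (x0 i) => ->; rewrite scale0r.
exists (fsynth chi (fun i => `|x i|)).
  by apply: (fsynth_neq0 chi_iso (i := i)); rewrite normr_eq0.
rewrite (expsup_ucomb L_U) Pt_fsynth // nrm2_ucomb // lpG2_fsynth_normc //.
have -> : (fun i => real_complex R (expR (lam i * t)) * `|x i|) =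
    (fun i => `|x i * real_complex R (expR (lam i * t))|).
  apply/funext => j; rewrite normrM mulrC; congr (_ * _).
  by rewrite ger0_norm // ler0c expR_ge0.
by apply: ler_wpM2r; [rewrite invr_ge0 powR_ge0 | exact: nrm4_ucomb_le].
Qed.

End NormComparison.

Theorem mainTheorem19 (R : realType) (d : nat) (G : finZmodType)
    (L : {linear 'M[R[i]]_d -> 'M[R[i]]_d})
    (U : G -> 'M[R[i]]_d) (lam : G -> R) (chi : G -> G -> R[i]) :
  #|G| = (d ^ 2)%N ->
  liouvillian L -> unital L -> reversible L ->
  almost_commuting_unitary_basis U ->
  (forall i, L (U i) = real_complex R (lam i) *: U i) ->
  character_iso chi ->
  forall t : R, 0 <= t ->
    (norm24_mx (expsup L t) <= norm24_fun (Pt chi lam t))%E.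
Proof.
move=> card_G _ _ _ U_basis L_U chi_iso t _.
apply: ge_ereal_sup => _ [X X0 <-].
have [f f0 ratio_le] := expsup_ratio_le card_G U_basis chi_iso L_U t X0.
apply: le_trans (ereal_sup_ubound _) => /=; last by exists f.
by rewrite lee_fin.
Qed.
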